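(* Let $a,b,n$ be positive integers and $h(j)=aj^n+b$ for $j\ge0$, $h(j)=0$ for $j<0$. Then: (1) if $a<3b$, then $\operatorname{hdepth}(h)=\lfloor a/b\rfloor+1$; (2) if $a\ge 3b$, then $\operatorname{hdepth}(h)\ge 3$.
   Context: For a nonzero function $h:\mathbb Z\to\mathbb Z_{\ge 0}$ with $h(j)=0$ for all sufficiently negative $j$, and integers $k\le d$, set $\beta_k^d(h)=\sum_{j\le k}(-1)^{k-j}\binom{d-j}{k-j}h(j)$, and $\operatorname{hdepth}(h)=\max\{d\in\mathbb Z:\ \beta_k^d(h)\ge 0\text{ for all integers }k\le d\}$. *)

From mathcomp Require Import all_boot all_order all_algebra.
Set Implicit Arguments. Unset Strict Implicit. Unset Printing Implicit Defensive.
Import Order.TTheory GRing.Theory Num.Theory.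
Local Open Scope ring_scope.

(* beta_k^d(h) = sum_{j <= k} (-1)^(k-j) C(d-j, k-j) h(j), for h : Z -> Z_{>=0}
   vanishing below [lo]; the sum therefore ranges over lo <= j <= k
   (and is the empty sum 0 when k < lo).  For k <= d and j <= k the
   quantities d-j, k-j are nonnegative, so the nat binomial is exact. *)
Definition beta (lo : int) (h : int -> int) (k d : int) : int :=
  if lo <= k then
    \sum_(i < `|(k - lo + 1)%R|%N)
       ((-1) ^+ `|(k - (lo + i%:Z))%R|%N
        * ('C(`|(d - (lo + i%:Z))%R|%N, `|(k - (lo + i%:Z))%R|%N))%:R
        * h (lo + i%:Z))
  else 0.

Definition hdepth_ok (lo : int) (h : int -> int) (d : int) : Prop :=
  forall k : int, k <= d -> 0 <= beta lo h k d.

Definition is_hdepth (lo : int) (h : int -> int) (d : int) : Prop :=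
  hdepth_ok lo h d /\ forall d' : int, hdepth_ok lo h d' -> d' <= d.

From mathcomp Require Import all_boot all_order all_algebra zify.
From Stdlib Require Import Classical.
Set Implicit Arguments. Unset Strict Implicit. Unset Printing Implicit Defensive.
Import Order.TTheory GRing.Theory Num.Theory.
Local Open Scope ring_scope.

(* Only the values h(0) = b, h(1) = a + b, h(2) = a 2^n + b and
   h(3) = a 3^n + b matter:
   - an upper bound: beta_1^d(h) = h(1) - d h(0), so every admissible d
     satisfies d b <= a + b, i.e. d <= floor(a/b) + 1;
   - a lower bound: for 1 <= d <= 3 with (d - 1) b <= a, the finitely many
     numbers beta_k^d(h), k <= d, are explicit and nonnegative (using
     2 <= 2^n <= 3^n);
   - admissible degrees are bounded above, so a maximal one exists.
   If a < 3b then d = floor(a/b) + 1 <= 3 meets both bounds and is the hdepth;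
   if a >= 3b then d = 3 is admissible, hence hdepth(h) >= 3. *)

Local Arguments binomial : simpl nomatch.

Lemma beta_nat (h : int -> int) (m D : nat) : (m <= D)%N ->
  beta 0 h m%:Z D%:Z =
  \sum_(i < m.+1) (-1) ^+ (m - i)%N * ('C(D - i, m - i))%:R * h i%:Z.
Proof.
move=> le_mD.
rewrite /beta lez_nat leq0n subr0 (_ : m%:Z + 1 = m.+1%:Z); last by rewrite -addn1.
rewrite absz_nat; apply: eq_bigr => i _.
have le_im : (i <= m)%N by rewrite -ltnS.
by rewrite add0r subzn // absz_nat subzn ?(leq_trans le_im).
Qed.

(* beta_k^d vanishes for k < 0, so admissibility of a natural d only
   requires checking the natural indices k <= d. *)
Lemma hdepth_ok_nat (h : int -> int) (d : nat) :
  (forall m, (m <= d)%N -> 0 <= beta 0 h m%:Z d%:Z) -> hdepth_ok 0 h d%:Z.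
Proof. by move=> H [m|m] le_md; [apply: H | rewrite /beta]. Qed.

Lemma beta1 (h : int -> int) (d : nat) : (0 < d)%N ->
  beta 0 h 1 d%:Z = h 1 - d%:Z * h 0.
Proof.
case: d => // d _; rewrite beta_nat // !big_ord_recr big_ord0 /= bin1 bin0.
by rewrite subn0 subnn bin0 expr1 expr0 add0r mulN1r mul1r addn1 mulNr addrC mul1r natz.
Qed.

Lemma hdepth_ok_bound (h : int -> int) (d : int) : 0 < d ->
  hdepth_ok 0 h d -> d * h 0 <= h 1.
Proof.
case: d => // d d_gt0 ok_d.
by have := ok_d 1 (d_gt0 : 1 <= d%:Z); rewrite beta1 // subr_ge0.
Qed.

Lemma hdepth_ok_le_div (h : int -> int) (a b : nat) : (0 < b)%N ->
  h 0 = b%:Z -> h 1 = a%:Z + b%:Z ->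
  forall d, hdepth_ok 0 h d -> d <= (a %/ b)%N%:Z + 1.
Proof.
move=> b_gt0 h0 h1 d ok_d.
case: (ltrP 0 d) => [d_gt0|d_le0]; last exact: le_trans d_le0 _.
have := hdepth_ok_bound d_gt0 ok_d; rewrite h0 h1.
case: d d_gt0 {ok_d} => // d _ le_db.
have : (d.-1 * b <= a)%N by lia.
by rewrite -(leq_divRL _ _ b_gt0); lia.
Qed.

Lemma hdepth_ok_small (h : int -> int) (a b X Y : int) (d : nat) :
  h 0 = b -> h 1 = a + b -> h 2 = a * X + b -> h 3 = a * Y + b ->
  0 <= b -> 2 <= X -> X <= Y -> (0 < d <= 3)%N -> (d.-1)%:Z * b <= a ->
  hdepth_ok 0 h d%:Z.
Proof.
move=> h0 h1 h2 h3 b_ge0 X_ge2 le_XY /andP[d_gt0 d_le3] le_ab.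
apply: hdepth_ok_nat => m le_md; rewrite beta_nat //.
case: d d_gt0 d_le3 le_md le_ab => [|[|[|[|d]]]] // _ _;
  case: m => [|[|[|[|m]]]] // _ /=;
  rewrite !big_ord_recr big_ord0 /= ?exprS ?expr0 ?h0 ?h1 ?h2 ?h3; nia.
Qed.

Lemma int_max_exists (P : int -> Prop) (d0 M : int) :
  P d0 -> (forall d, P d -> d <= M) ->
  exists d, P d /\ forall d', P d' -> d' <= d.
Proof.
move=> Pd0 le_M.
suff: forall k d1, P d1 -> M - d1 <= k%:Z ->
    exists d, P d /\ forall d', P d' -> d' <= d.
  by move=> /(_ `|M - d0|%N d0 Pd0); apply; rewrite abszE ler_norm.
elim=> [|k IHk] d1 Pd1 gap.
  exists d1; split => // d' Pd'; have := le_M _ Pd'; have := le_M _ Pd1; lia.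
case: (classic (exists d', P d' /\ d1 < d')) => [[d' [Pd' lt_d1d']]|no_larger].
  by apply: (IHk d') => //; lia.
exists d1; split => // d' Pd'; rewrite leNgt; apply/negP => lt_d1d'.
by apply: no_larger; exists d'.
Qed.

Theorem proposition3p3 (a b n : nat) (ha : (0 < a)%N) (hb : (0 < b)%N) (hn : (0 < n)%N) :
  let h : int -> int := fun j => if 0 <= j then a%:Z * j ^+ n + b%:Z else 0 in
  ((a < 3 * b)%N -> is_hdepth 0 h ((a %/ b)%N%:Z + 1)) /\
  ((3 * b <= a)%N -> exists d : int, is_hdepth 0 h d /\ 3 <= d).
Proof.
move=> h.
have h0 : h 0 = b%:Z by rewrite /h /= expr0n gtn_eqF // mulr0 add0r.
have h1 : h 1 = a%:Z + b%:Z by rewrite /h /= expr1n mulr1.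
have pow2_ge2 : 2 <= (2 : int) ^+ n by apply: ler_eXnr.
have pow2_le_pow3 : (2 : int) ^+ n <= 3 ^+ n by apply: lerXn2r.
have ok_small := @hdepth_ok_small h _ _ _ _ _ h0 h1 erefl erefl isT
  pow2_ge2 pow2_le_pow3.
have upper := hdepth_ok_le_div hb h0 h1.
split => le_ab.
- split=> //; rewrite (_ : _ + 1 = (a %/ b).+1%:Z); last by rewrite -addn1.
  apply: ok_small; first by rewrite /= ltnS -ltnS ltn_divLR.
  by rewrite /= -PoszM lez_nat leq_divM.
- have ok3 : hdepth_ok 0 h 3.
    apply: ok_small => //=; rewrite -PoszM lez_nat (leq_trans _ le_ab) //.
    by rewrite leq_mul2r orbT.
  have [d [ok_d max_d]] := int_max_exists ok3 upper.
  by exists d; split => //; apply: max_d.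
Qed.
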